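(* Let $n\ge 2$ and let $g\ge0$ be an integer with $\gcd(n,g)=1$. Let $(H_{k,m})_{m\ge0}$ be a generalized $k$-Horadam sequence with $H_{k,1}\ne0$, and put $M=g(k)(H_{k,n}-H_{k,0})$, $N=H_{k,1}-H_{k,n+1}$, and assume $M\neq 0$. Then $$\det C_{n,g}(H)=\det Q_g\cdot\left[H_{k,1}N^{n-1}+H_{k,1}M^{n-2}\sum_{i=1}^{n-1}\left(-\frac{H_{k,2}H_{k,i+1}}{H_{k,1}}+H_{k,i+2}\right)\left(\frac{N}{M}\right)^{i-1}\right].$$
   Context: Generalized $k$-Horadam sequence: $k>0$ is a real number, $f(k),g(k)$ are real numbers (values of fixed polynomials in $k$) with $f(k)^2+4g(k)>0$, and $a,b\in\mathbb{R}$; the sequence is defined by $H_{k,0}=a$, $H_{k,1}=b$, $H_{k,m+2}=f(k)H_{k,m+1}+g(k)H_{k,m}$ for $m\ge 0$. The real number $g(k)$ is unrelated to the integer shift parameter $g$. For $n\ge1$, an integer $g\ge 0$ and numbers $a_0,\dots,a_{n-1}$, the $g$-circulant matrix $g\text{-}circ(a_0,\dots,a_{n-1})$ is the $n\times n$ matrix whose $(i,j)$ entry ($0\le i,j\le n-1$) is $a_{(j-ig)\bmod n}$. $C_{n,g}(H):=g\text{-}circ(H_{k,1},\dots,H_{k,n})$. $Q_g:=g\text{-}circ(1,0,\dots,0)$, i.e. the $n\times n$ matrix whose $(i,j)$ entry is $1$ if $j\equiv ig \pmod n$ and $0$ otherwise. *)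

From HB Require Import structures.
From mathcomp Require Import all_boot all_order all_algebra.
Set Implicit Arguments. Unset Strict Implicit. Unset Printing Implicit Defensive.
Import Order.TTheory GRing.Theory Num.Theory.
Local Open Scope ring_scope.

Fixpoint horadam {R : pzRingType} (a b fk gk : R) (m : nat) : R :=
  match m with
  | 0 => a
  | 1 => b
  | S ((S m'') as m') => fk * horadam a b fk gk m' + gk * horadam a b fk gk m''
  end.

(* g-circulant matrix g-circ(a_0,...,a_{n-1}): entry (i,j) is a_{(j - i g) mod n}.
   (j - i*g) mod n is computed as (j + (n - (i*g mod n))) mod n. *)
Definition gcirc {R : pzRingType} (n g : nat) (a : nat -> R) : 'M[R]_n :=
  \matrix_(i < n, j < n) a ((j + (n - (i * g) %% n)) %% n)%N.

Definition Cng {R : pzRingType} (n g : nat) (H : nat -> R) : 'M[R]_n :=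
  gcirc n g (fun t => H t.+1).

Definition Qg {R : pzRingType} (n g : nat) : 'M[R]_n :=
  gcirc n g (fun t => if t == 0%N then 1 else 0).

(* Since Q_g C_{n,1}(H) = C_{n,g}(H), only the ordinary circulant C of
   (H_1, ..., H_n) matters. Replacing row i of C by row_i - f row_{i+1} - g row_{i+2}
   for i < n - 2 turns it, by the recurrence, into N e_i - M e_{i+1}. Adding to
   column 0 the columns l < n - 1 with weights s^l, where M s = N, clears column 0 in
   those rows. Expanding along column 0 leaves two lower triangular minors, with
   diagonals (-M, ..., -M, H_1) and (-M, ..., -M, H_2). *)

From mathcomp Require Import all_boot all_order all_algebra.
From mathcomp Require Import zify ring.
Import GRing.Theory.
Local Open Scope ring_scope.

(* For i, j < n this is (j - i) mod n; it is the index used by [gcirc]. *)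
Definition cdiff (n i j : nat) : nat := ((j + (n - i)) %% n)%N.

Lemma modn_succ_eq1 n d : (1 < n)%N -> (d < n)%N -> (d.+1 %% n == 1)%N = (d == 0)%N.
Proof.
move=> n_gt1 lt_dn; case: (ltngtP d.+1 n) => [lt_d1n | | eq_d1n].
- by rewrite modn_small.
- by rewrite ltnNge lt_dn.
- by rewrite eq_d1n modnn; apply/esym/eqP => d0; rewrite -eq_d1n d0 in n_gt1.
Qed.

Section CyclicDifference.
Variable n : nat.

Lemma cdiffE i j : (i < n)%N -> (j < n)%N ->
  cdiff n i j = (if (i <= j)%N then j - i else j + n - i)%N.
Proof.
move=> lt_in lt_jn; rewrite /cdiff; case: leqP => [le_ij|lt_ji].
  by rewrite (_ : j + (n - i) = j - i + n)%N ?modnDr ?modn_small //; lia.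
by rewrite modn_small; lia.
Qed.

Lemma cdiff_addl k i j : (i + k <= n)%N -> cdiff n i j = ((cdiff n (i + k) j + k) %% n)%N.
Proof.
move=> le_ikn; rewrite /cdiff modnDml -addnA subnDA subnK //.
by rewrite leq_subRL // (leq_trans (leq_addr k i)).
Qed.

Lemma cdiff_lt i j : (0 < n)%N -> (cdiff n i j < n)%N.
Proof. by rewrite ltn_mod. Qed.

Lemma cdiff_eq0 i j : (i < n)%N -> (j < n)%N -> (cdiff n i j == 0)%N = (j == i).
Proof. by move=> lt_in lt_jn; rewrite cdiffE //; case: leqP => ?; apply/eqP/eqP; lia. Qed.

Lemma cdiff_eq1 i j : (i.+1 < n)%N -> (j < n)%N -> (cdiff n i j == 1)%N = (j == i.+1).
Proof.
move=> lt_i1n lt_jn; have n_gt1 : (1 < n)%N := leq_ltn_trans (ltn0Sn i) lt_i1n.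
have lt_in : (i < n)%N := ltnW lt_i1n.
by rewrite (cdiff_addl 1) ?addn1 // modn_succ_eq1 // ?cdiff_eq0 // cdiff_lt // ltnW.
Qed.

End CyclicDifference.

Lemma gcircE (R : pzRingType) n g (c : nat -> R) (i j : 'I_n) :
  gcirc n g c i j = c (cdiff n ((i * g) %% n) j).
Proof. by rewrite mxE. Qed.

Lemma gcirc1E (R : pzRingType) n (c : nat -> R) (i j : 'I_n) :
  gcirc n 1 c i j = c (cdiff n i j).
Proof. by rewrite gcircE muln1 modn_small. Qed.

Lemma sum_delta_natl {R : pzRingType} (F : nat -> R) n k : (k < n)%N ->
  \sum_(l < n) (l == k :> nat)%:R * F l = F k.
Proof.
move=> lt_kn; under eq_bigr do rewrite mulr_natl mulrb.
by rewrite -big_mkcond big_ord1_eq lt_kn.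
Qed.

Lemma Qg_mul_circ (R : pzRingType) n g (c : nat -> R) : (0 < n)%N ->
  Qg n g *m gcirc n 1 c = gcirc n g c.
Proof.
move=> n_gt0; apply/matrixP => i j; rewrite mxE gcircE.
have ig_lt_n : ((i * g) %% n < n)%N by rewrite ltn_mod.
have nat_if (b : bool) : (if b then 1 else 0 : R) = b%:R by case: b.
under eq_bigr => l _ do rewrite gcircE gcirc1E cdiff_eq0 // nat_if.
by rewrite (sum_delta_natl (fun l => c (cdiff n l j))).
Qed.

Section ColumnZeroElimination.
Variables (R : comPzRingType) (n : nat) (v : nat -> R).

Definition col0_elim_mx : 'M[R]_n.+1 :=
  \matrix_(i, j) if j == 0 :> nat then v i else (i == j :> nat)%:R.

Lemma det_col0_elim_mx : \det col0_elim_mx = v 0.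
Proof.
rewrite det_trig; last first.
  apply/is_trig_mxP => i j lt_ij; rewrite mxE gtn_eqF ?(leq_trans _ lt_ij) //.
  by rewrite ltn_eqF.
rewrite big_ord_recl mxE /= big1 ?mulr1 // => i _.
by rewrite mxE /= eqxx.
Qed.

Lemma mulmx_col0_elim0 (A : 'M[R]_n.+1) i :
  (A *m col0_elim_mx) i ord0 = \sum_(l < n.+1) A i l * v l.
Proof. by rewrite mxE; under eq_bigr do rewrite mxE. Qed.

Lemma mulmx_col0_elim_lift (A : 'M[R]_n.+1) i (j : 'I_n) :
  (A *m col0_elim_mx) i (lift ord0 j) = A i (lift ord0 j).
Proof.
rewrite mxE (bigD1 (lift ord0 j)) //= mxE eqxx mulr1 big1 ?addr0 // => l ne_lj.
rewrite mxE /= (_ : (l == bump 0 j :> nat) = false) ?mulr0 //.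
by apply: contraNF ne_lj => /eqP eq_lj; apply/eqP/val_inj.
Qed.

End ColumnZeroElimination.

Arguments col0_elim_mx {R n} v.

Section CirculantHoradam.
Variables (R : comPzRingType) (fk gk : R) (H : nat -> R).
Hypothesis H_rec : forall t, H t.+2 = fk * H t.+1 + gk * H t.
Variable m : nat.

Local Notation n := m.+2.
Local Notation C := (gcirc n 1 (fun t => H t.+1)).
Local Notation N := (H 1 - H n.+1).
Local Notation M := (gk * (H n - H 0)).

Lemma horadam_cyclic_step e : (e < n)%N ->
  H (e.+2 %% n).+1 - fk * H (e.+1 %% n).+1 - gk * H e.+1
  = N * (e.+2 %% n == 0)%N%:R - M * (e.+2 %% n == 1)%N%:R.
Proof.
move=> lt_en; have [lt_em | ge_em] := ltnP e m.
  have lt_e2n : (e.+2 < n)%N by rewrite !ltnS.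
  rewrite !modn_small ?(ltn_trans (ltnSn _) lt_e2n) //.
  by rewrite H_rec /= !mulr0; ring.
have [-> | ->] : e = m \/ e = m.+1 by lia.
  by rewrite modnn modn_small // (H_rec m.+1) /= mulr1 mulr0; ring.
by rewrite -[m.+3]/(1 + n)%N modnDr modnn (H_rec 0) /= mulr0 mulr1; ring.
Qed.

Definition horadam_rowop : 'M[R]_n :=
  \matrix_(i, j) if (i < m)%N then
    (j == i :> nat)%:R - fk * (j == i.+1 :> nat)%:R - gk * (j == i.+2 :> nat)%:R
  else (j == i :> nat)%:R.

Lemma horadam_rowop_circE (i j : 'I_n) :
  (horadam_rowop *m C) i j =
  if (i < m)%N then N * (j == i :> nat)%:R - M * (j == i.+1 :> nat)%:R else C i j.
Proof.
rewrite mxE; case: ifP => lt_im; last first.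
  under eq_bigr do rewrite mxE lt_im gcirc1E.
  by rewrite (sum_delta_natl (fun l => H (cdiff n l j).+1)) ?gcirc1E.
have lt_i2n : (i.+2 < n)%N by rewrite !ltnS.
have lt_i1n : (i.+1 < n)%N := ltnW lt_i2n.
under eq_bigr do rewrite mxE lt_im gcirc1E !mulrBl -!mulrA.
rewrite !sumrB -!mulr_sumr !(sum_delta_natl (fun l => H (cdiff n l j).+1)) //.
rewrite -(@cdiff_eq0 n) // -(@cdiff_eq1 n) //.
rewrite (@cdiff_addl n 2 i) ?(@cdiff_addl n 1 i.+1) ?addn1 ?addn2 //.
by rewrite horadam_cyclic_step // cdiff_lt.
Qed.

Lemma det_horadam_rowop : \det horadam_rowop = 1.
Proof.
rewrite -det_tr det_trig; last first.
  apply/is_trig_mxP => i j lt_ij; rewrite !mxE (ltn_eqF lt_ij).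
  by rewrite (ltn_eqF (leqW lt_ij)) (ltn_eqF (leqW (leqW lt_ij))) !mulr0 !subr0 if_same.
apply: big1 => i _; rewrite !mxE eqxx (ltn_eqF (ltnSn i)) (ltn_eqF (leqW (ltnSn i))).
by rewrite !mulr0 !subr0 if_same.
Qed.

(* [s] stands for N / M; only [M * s = N] is used, so no division is needed. *)
Variable s : R.
Hypothesis Ms : M * s = N.

Local Notation E :=
  (horadam_rowop *m C *m col0_elim_mx (fun l => if (l < m.+1)%N then s ^+ l else 0)).

Lemma reduced_circ_col0 (i : 'I_n) : E i ord0 =
  if (i < m)%N then 0 else \sum_(l < m.+1) C i (widen_ord (leqnSn _) l) * s ^+ l.
Proof.
rewrite mulmx_col0_elim0 big_ord_recr /= ltnn mulr0 addr0.
under eq_bigr do rewrite ltn_ord horadam_rowop_circE.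
case: ifP => // lt_im.
under eq_bigr do rewrite mulrBl -!mulrA /=.
rewrite sumrB -!mulr_sumr !(sum_delta_natl (fun l => s ^+ l)) ?(leqW lt_im) //.
by rewrite exprS !mulrA Ms subrr.
Qed.

Lemma reduced_circ_minor (i0 : 'I_n) : (m <= i0)%N ->
  \det (row' i0 (col' ord0 E)) = (- M) ^+ m * C (lift i0 ord_max) (lift ord0 ord_max).
Proof.
move=> le_mi0; have lift_low k : (k < m)%N -> bump i0 k = k.
  by move=> lt_km; rewrite /bump leqNgt (leq_trans lt_km le_mi0).
rewrite det_trig; last first.
  apply/is_trig_mxP => k l lt_kl; rewrite 2!mxE mulmx_col0_elim_lift.
  have lt_km : (k < m)%N := leq_trans lt_kl (ltn_ord l).
  rewrite horadam_rowop_circE lift0 /= lift_low // lt_km.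
  by rewrite (gtn_eqF (leqW lt_kl)) eqSS (gtn_eqF lt_kl) !mulr0 subr0.
rewrite [X in X = _]/= big_ord_recr /= 2!mxE mulmx_col0_elim_lift.
rewrite horadam_rowop_circE ifF; last by rewrite /= ltnNge leq_addl.
rewrite (eq_bigr (fun=> - M)) ?prodr_const ?card_ord // => k _.
rewrite 2!mxE mulmx_col0_elim_lift horadam_rowop_circE lift0 /= lift_low ?ltn_ord //.
by rewrite eqxx (gtn_eqF (ltnSn k)) mulr0 mulr1 sub0r.
Qed.

Lemma circ_penult_row (l : 'I_m.+1) :
  C (widen_ord (leqnSn _) ord_max) (widen_ord (leqnSn _) l) =
  if (l < m)%N then H l.+3 else H 1.
Proof.
have lt_ln : (l < n)%N := ltn_trans (ltn_ord l) (ltnSn _).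
rewrite gcirc1E cdiffE //=; have [lt_lm | ge_lm] := ltnP l m.
  by rewrite (_ : l + n - m = l.+2)%N //; lia.
by rewrite (_ : l - m = 0)%N //; apply/eqP/(ltn_ord l).
Qed.

Lemma circ_last_row (l : 'I_m.+1) : C ord_max (widen_ord (leqnSn _) l) = H l.+2.
Proof.
have lt_ln : (l < n)%N := ltn_trans (ltn_ord l) (ltnSn _).
rewrite gcirc1E cdiffE //= leqNgt ltn_ord /=.
by rewrite (_ : l + n - m.+1 = l.+1)%N //; lia.
Qed.

Lemma det_horadam_circ_expanded :
  \det C = M ^+ m *
    (H 1 * \sum_(l < m.+1) (if (l < m)%N then H l.+3 else H 1) * s ^+ l
     - H 2 * \sum_(l < m.+1) H l.+2 * s ^+ l).
Proof.
have -> : \det C = \det E.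
  by rewrite !det_mulmx det_horadam_rowop det_col0_elim_mx /= expr0 mul1r mulr1.
rewrite (expand_det_col _ ord0) [in LHS]big_ord_recr [in LHS]big_ord_recr /=.
rewrite big1 ?add0r => [|i _]; last by rewrite reduced_circ_col0 /= ltn_ord mul0r.
rewrite /cofactor !reduced_circ_col0 !reduced_circ_minor //= ltnn ltnNge leqnSn /=.
have corner_last : C (lift (widen_ord (leqnSn _) ord_max) ord_max) (lift ord0 ord_max) = H 1.
  rewrite gcirc1E /= /bump leqnn add1n (_ : cdiff n m.+1 m.+1 = 0)%N //.
  by apply/eqP; rewrite cdiff_eq0.
have corner_penult : C (lift ord_max ord_max) (lift ord0 ord_max) = H 2.
  rewrite gcirc1E /= /bump ltnn add0n (_ : cdiff n m m.+1 = 1)%N //.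
  by apply/eqP; rewrite cdiff_eq1.
under eq_bigr do rewrite circ_penult_row.
under [X in _ + X * _]eq_bigr do rewrite circ_last_row.
have sign : (-1) ^+ m * (- M) ^+ m = M ^+ m by rewrite -exprMn mulN1r opprK.
by rewrite corner_last corner_penult !addn0 exprS -sign; ring.
Qed.

Lemma det_horadam_circ :
  \det C = H 1 * N ^+ m.+1 + M ^+ m * \sum_(l < m.+1) (H 1 * H l.+3 - H 2 * H l.+2) * s ^+ l.
Proof.
rewrite det_horadam_circ_expanded !big_ord_recr /= ltnn.
under eq_bigr do rewrite ltn_ord.
have split_sum : \sum_(l < m) (H 1 * H l.+3 - H 2 * H l.+2) * s ^+ l
    = H 1 * \sum_(l < m) H l.+3 * s ^+ l - H 2 * \sum_(l < m) H l.+2 * s ^+ l.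
  by rewrite !mulr_sumr -sumrB; apply: eq_bigr => l _; ring.
have pow_N : N ^+ m = M ^+ m * s ^+ m by rewrite -exprMn Ms.
by rewrite exprSr pow_N split_sum; ring.
Qed.

End CirculantHoradam.

Theorem theorem2 (R : realFieldType) (f g0 : {poly R}) (k a b : R) (n g : nat)
  (hk : 0 < k) (hdisc : 0 < f.[k] ^+ 2 + 4%:R * g0.[k])
  (hn : (2 <= n)%N) (hcop : coprime n g) :
  let H := horadam a b f.[k] g0.[k] in
  let M := g0.[k] * (H n - H 0%N) in
  let N := H 1%N - H n.+1 in
  H 1%N != 0 -> M != 0 ->
  \det (Cng n g H) =
    \det (Qg (R := R) n g) *
    (H 1%N * N ^+ n.-1
     + H 1%N * M ^+ (n - 2)
       * \sum_(1 <= i < n) (- (H 2%N * H i.+1) / H 1%N + H i.+2) * (N / M) ^+ i.-1).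
Proof.
case: n hn hcop => [|[|m]] // _ _ H M N H1_neq0 M_neq0.
have H_rec t : H t.+2 = f.[k] * H t.+1 + g0.[k] * H t by [].
have Ms : M * (N / M) = N by rewrite mulrC divfK.
rewrite /Cng -Qg_mul_circ // det_mulmx (@det_horadam_circ _ _ _ _ H_rec _ _ Ms) /=.
congr (_ * (_ + _)).
rewrite -/M !subSS subn0 big_add1 big_mkord /=.
rewrite [H 1%N * _]mulrC -mulrA; congr (_ * _).
by rewrite mulr_sumr; apply: eq_bigr => l _; field.
Qed.
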